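(* Let $H$ be a simple undirected graph on vertex set $[n]$, let $\{u_i\}_{i=1}^n$ and $\{w_j\}_{j=1}^n$ be two orthonormal families in $\mathbb{C}^d$, and let $\rho\in\mathcal{F}_H$ be a bipartite state that is PPT. Let $\{e_i\}$ be the standard basis of $\mathbb{C}^n$. Then: (1) with $K=\sum_{i=1}^n |e_i\rangle\langle u_i\otimes w_i|$, we have $Z_K(\rho)=K\rho K^*\in\mathcal{M}_n^+(H)$; (2) with $K=\sum_{i=1}^n |e_i\rangle\langle u_i\otimes \overline{w_i}|$, we have $Z^\Gamma_K(\rho)=K\rho^\Gamma K^*\in\mathcal{M}_n^+(H)$.
   Context: $\rho^\Gamma$ denotes the partial transpose on the second factor (in the standard basis), and $\overline{w}$ is entrywise complex conjugation; $\rho$ is PPT if $\rho\ge0$ and $\rho^\Gamma\ge 0$. For an $n\times n$ matrix $X$, $G(X)$ is the undirected graph on $[n]$ with edge set $\{\{i,j\}: i\ne j,\ X_{ij}X_{ji}\neq 0\}$ (for nonnegative matrices: both entries positive). $\mathcal{M}_n(H)$ is the set of self-adjoint $n\times n$ matrices $X$ with $G(X)\subseteq H$, and $\mathcal{M}_n^+(H)=\mathcal{M}_n^+\cap\mathcal{M}_n(H)$. Given the families $\{u_i\},\{w_j\}$, for a bipartite PSD $\rho$ define the $n\times n$ nonnegative matrix $D(\rho)_{ij}=\langle u_i\otimes w_j|\rho|u_i\otimes w_j\rangle$, and let $\mathcal{F}_H=\{\rho\in(\mathcal{M}_d\otimes\mathcal{M}_d)^+ : G(D(\rho))\subseteq H\}$.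 *)

From HB Require Import structures.
From mathcomp Require Import all_boot all_order all_algebra.
From mathcomp Require Export mxtens.
Set Implicit Arguments. Unset Strict Implicit. Unset Printing Implicit Defensive.
Import Order.TTheory GRing.Theory Num.Theory.
Local Open Scope ring_scope.

Definition adjoint_mx (C : numClosedFieldType) m n (A : 'M[C]_(m, n)) : 'M[C]_(n, m) :=
  map_mx Num.conj (A^T).

Definition entry_conj (C : numClosedFieldType) m n (A : 'M[C]_(m, n)) : 'M[C]_(m, n) :=
  map_mx Num.conj A.

Definition selfadj_mx (C : numClosedFieldType) n (A : 'M[C]_n) : Prop := adjoint_mx A = A.

Definition psd_mx (C : numClosedFieldType) n (A : 'M[C]_n) : Prop :=
  selfadj_mx A /\ forall v : 'cV[C]_n, 0 <= (adjoint_mx v *m A *m v) ord0 ord0.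

Definition orthonormal_family (C : numClosedFieldType) d n (u : 'I_n -> 'cV[C]_d) : Prop :=
  forall i j, (adjoint_mx (u i) *m u j) ord0 ord0 = (i == j)%:R.

(* partial transpose on the second factor of C^d (x) C^d (standard basis,
   Kronecker index (a,b) |-> a*d+b as in tensmx) *)
Definition partial_transpose (C : numClosedFieldType) d (rho : 'M[C]_(d * d)) : 'M[C]_(d * d) :=
  \matrix_(i, j) rho (mxtens_index ((mxtens_unindex i).1, (mxtens_unindex j).2))
                     (mxtens_index ((mxtens_unindex j).1, (mxtens_unindex i).2)).

Definition ppt (C : numClosedFieldType) d (rho : 'M[C]_(d * d)) : Prop :=
  psd_mx rho /\ psd_mx (partial_transpose rho).

Definition simple_graph n (H : rel 'I_n) : Prop :=
  symmetric H /\ irreflexive H.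

(* G(X) subset of H: every edge {i,j} (i<>j, X_ij X_ji <> 0) of G(X) is an edge of H *)
Definition graph_sub (C : numClosedFieldType) n (X : 'M[C]_n) (H : rel 'I_n) : Prop :=
  forall i j, i != j -> X i j * X j i != 0 -> H i j.

Definition Mplus (C : numClosedFieldType) n (H : rel 'I_n) (X : 'M[C]_n) : Prop :=
  psd_mx X /\ graph_sub X H.

Definition Dmat (C : numClosedFieldType) d n (u w : 'I_n -> 'cV[C]_d)
  (rho : 'M[C]_(d * d)) : 'M[C]_n :=
  \matrix_(i, j) (adjoint_mx (u i *t w j) *m rho *m (u i *t w j)) ord0 ord0.

Definition FH (C : numClosedFieldType) d n (u w : 'I_n -> 'cV[C]_d)
  (H : rel 'I_n) (rho : 'M[C]_(d * d)) : Prop :=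
  psd_mx rho /\ graph_sub (Dmat u w rho) H.

Definition Kop (C : numClosedFieldType) d n (u w : 'I_n -> 'cV[C]_d) : 'M[C]_(n, d * d) :=
  \sum_(i < n) (delta_mx i ord0 : 'cV[C]_n) *m adjoint_mx (u i *t w i).

From HB Require Import structures.
From mathcomp Require Import all_boot all_order all_algebra.
From mathcomp Require Import ring.
Import Order.TTheory GRing.Theory Num.Theory.
Local Open Scope ring_scope.

(* Entry (i, j) of K rho K^* is <u_i (x) w_i| rho |u_j (x) w_j>, which equals
   <u_i (x) conj w_j| rho^Gamma |u_j (x) conj w_i>.  For a positive semidefinite
   matrix, a nonzero off-diagonal value <x|A|y> forces <x|A|x> and <y|A|y> to be
   nonzero (Cauchy-Schwarz); applied to rho^Gamma these diagonal values are
   D(rho)_ij and D(rho)_ji, so {i, j} is an edge of G(D(rho)), hence of H.  For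
   K rho^Gamma K^* the roles of rho and rho^Gamma are exchanged. *)

Set Implicit Arguments.
Unset Strict Implicit.
Unset Printing Implicit Defensive.

Section PPTSupport.
Variable C : numClosedFieldType.

Definition mxform n (A : 'M[C]_n) (x y : 'cV[C]_n) : C :=
  (adjoint_mx x *m A *m y) ord0 ord0.

Lemma adjoint_mxK m n (A : 'M[C]_(m, n)) : adjoint_mx (adjoint_mx A) = A.
Proof. by apply/matrixP => i j; rewrite !mxE conjCK. Qed.

Lemma adjoint_mxE m n (A : 'M[C]_(m, n)) i j : adjoint_mx A i j = (A j i)^*.
Proof. by rewrite !mxE. Qed.

Lemma adjoint_mxM m n p (A : 'M[C]_(m, n)) (B : 'M[C]_(n, p)) :
  adjoint_mx (A *m B) = adjoint_mx B *m adjoint_mx A.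
Proof. by rewrite /adjoint_mx trmx_mul map_mxM. Qed.

Lemma adjoint_mxD m n (A B : 'M[C]_(m, n)) :
  adjoint_mx (A + B) = adjoint_mx A + adjoint_mx B.
Proof. by rewrite /adjoint_mx raddfD map_mxD. Qed.

Lemma adjoint_mxZ m n (s : C) (A : 'M[C]_(m, n)) :
  adjoint_mx (s *: A) = s^* *: adjoint_mx A.
Proof. by rewrite /adjoint_mx linearZ map_mxZ. Qed.

Lemma entry_conjK m n (A : 'M[C]_(m, n)) : entry_conj (entry_conj A) = A.
Proof. by apply/matrixP => i j; rewrite !mxE conjCK. Qed.

Lemma psd_mx_congr m n (K : 'M[C]_(m, n)) (A : 'M[C]_n) :
  psd_mx A -> psd_mx (K *m A *m adjoint_mx K).
Proof.
move=> [selfadjA posA]; split.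
  by rewrite /selfadj_mx !adjoint_mxM adjoint_mxK selfadjA mulmxA.
by move=> v; have := posA (adjoint_mx K *m v); rewrite adjoint_mxM adjoint_mxK !mulmxA.
Qed.

Lemma mxformE n (A : 'M[C]_n) x y :
  mxform A x y = \sum_(p < n) \sum_(q < n) (x p 0)^* * A p q * y q 0.
Proof.
rewrite /mxform !mxE; under eq_bigr => q _ do rewrite !mxE big_distrl /=.
by rewrite exchange_big; apply: eq_bigr => p _; apply: eq_bigr => q _; rewrite !mxE.
Qed.

Lemma mxform_adj n (A : 'M[C]_n) x y :
  selfadj_mx A -> mxform A y x = (mxform A x y)^*.
Proof.
move=> selfadjA.
by rewrite /mxform -adjoint_mxE !adjoint_mxM adjoint_mxK selfadjA mulmxA.
Qed.

Lemma mxform_expand n (A : 'M[C]_n) s x y :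
  mxform A (s *: x + y) (s *: x + y) =
  s^* * s * mxform A x x + s^* * mxform A x y + s * mxform A y x + mxform A y y.
Proof.
rewrite /mxform adjoint_mxD adjoint_mxZ !mulmxDl !mulmxDr -!scalemxAl -!scalemxAr.
by rewrite !mxE; ring.
Qed.

Lemma psd_mxform_eq0 n (A : 'M[C]_n) x y :
  psd_mx A -> mxform A x x = 0 -> mxform A x y = 0.
Proof.
move=> [selfadjA posA] xx0; apply/eqP/contraT => b_neq0.
set b := mxform A x y in b_neq0; set c := mxform A y y.
have c_ge0 : 0 <= c := posA y.
have bC_neq0 : b^* != 0 by rewrite conjC_eq0.
(* the value of the form at t x + y is c - 2 (c + 1) < 0 *)
pose t := - (c + 1) / b^*.
have tC : t^* = - (c + 1) / b.
  by rewrite fmorph_div /= rmorphN rmorphD /= conjC1 (geC0_conj c_ge0) conjCK.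
have : 0 <= mxform A (t *: x + y) (t *: x + y) := posA _.
rewrite mxform_expand xx0 (mxform_adj x y selfadjA) -/b -/c tC /t mulr0 add0r.
rewrite !divfK // (_ : _ + c = - (c + 2)); last by ring.
by rewrite oppr_ge0 => /(lt_le_trans (ltr_wpDl c_ge0 (ltr0Sn _ 1))); rewrite ltxx.
Qed.

Lemma psd_mxform_diag_neq0 n (A : 'M[C]_n) x y : psd_mx A ->
  mxform A x y != 0 -> mxform A x x != 0 /\ mxform A y y != 0.
Proof.
move=> psdA xy_neq0; split; apply: contra xy_neq0 => /eqP/(psd_mxform_eq0 _ psdA) form0.
  by rewrite form0.
by rewrite (mxform_adj _ _ psdA.1) form0 conjC0.
Qed.

Lemma sum_mxtens_index m n (F : 'I_(m * n) -> C) :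
  \sum_(p < m * n) F p = \sum_(i < m) \sum_(j < n) F (mxtens_index (i, j)).
Proof.
rewrite pair_big /= (reindex (@mxtens_index m n)) /=; first by apply: eq_bigr => -[].
by exists (@mxtens_unindex m n) => k _; rewrite (mxtens_indexK, mxtens_unindexK).
Qed.

Lemma tensmx_cV_index m n (a : 'cV[C]_m) (b : 'cV[C]_n) i j (k : 'I_(1 * 1)) :
  (a *t b) (mxtens_index (i, j)) k = a i 0 * b j 0.
Proof. by rewrite mxE mxtens_indexK /= !ord1. Qed.

Lemma mxform_partial_transpose d (rho : 'M[C]_(d * d)) (a b c e : 'cV[C]_d) :
  mxform (partial_transpose rho) (a *t b) (c *t e) =
  mxform rho (a *t entry_conj e) (c *t entry_conj b).
Proof.
rewrite !mxformE !sum_mxtens_index; apply: eq_bigr => i _.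
under eq_bigr => j _ do rewrite sum_mxtens_index.
under [RHS]eq_bigr => j _ do rewrite sum_mxtens_index.
rewrite exchange_big; under eq_bigr => k _ do rewrite exchange_big.
rewrite exchange_big /=.
apply: eq_bigr => j _; apply: eq_bigr => k _; apply: eq_bigr => l _.
by rewrite !tensmx_cV_index !mxE !mxtens_indexK /= !rmorphM /= !conjCK; ring.
Qed.

Lemma ppt_mxform_tens_diag_neq0 d (rho : 'M[C]_(d * d)) (a b c e : 'cV[C]_d) :
  psd_mx (partial_transpose rho) -> mxform rho (a *t b) (c *t e) != 0 ->
  mxform rho (a *t e) (a *t e) != 0 /\ mxform rho (c *t b) (c *t b) != 0.
Proof.
move=> psd_pt off_neq0.
rewrite -[b]entry_conjK -[e]entry_conjK -mxform_partial_transpose in off_neq0.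
have [] := psd_mxform_diag_neq0 psd_pt off_neq0.
by rewrite !mxform_partial_transpose !entry_conjK.
Qed.

Lemma KopE d n (u w : 'I_n -> 'cV[C]_d) :
  Kop u w = \matrix_(i, p) ((u i *t w i) p 0)^*.
Proof.
apply/matrixP => i p; rewrite /Kop summxE (bigD1 i) //= big1 => [|k ki].
  by rewrite !mxE big_ord1 !mxE !eqxx mul1r addr0.
by rewrite !mxE big_ord1 !mxE eq_sym (negbTE ki) mul0r.
Qed.

Lemma Kop_congr_entry d n (u w : 'I_n -> 'cV[C]_d) (A : 'M[C]_(d * d)) i j :
  (Kop u w *m A *m adjoint_mx (Kop u w)) i j = mxform A (u i *t w i) (u j *t w j).
Proof.
rewrite KopE /mxform !mxE; apply: eq_bigr => q _; rewrite !mxE conjCK.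
by congr (_ * _); apply: eq_bigr => p _; rewrite !mxE.
Qed.

Lemma graph_sub_support n (X Y : 'M[C]_n) (H : rel 'I_n) :
  (forall i j, X i j != 0 -> Y i j * Y j i != 0) -> graph_sub Y H -> graph_sub X H.
Proof.
move=> XY subY i j ij; rewrite mulf_eq0 negb_or => /andP[Xij_neq0 _].
exact: subY ij (XY i j Xij_neq0).
Qed.

End PPTSupport.

Theorem mainTheorem4 (C : numClosedFieldType) (d n : nat) (H : rel 'I_n)
  (u w : 'I_n -> 'cV[C]_d) (rho : 'M[C]_(d * d)) :
  simple_graph H -> orthonormal_family u -> orthonormal_family w ->
  FH u w H rho -> ppt rho ->
  Mplus H (Kop u w *m rho *m adjoint_mx (Kop u w)) /\
  Mplus H (Kop u (fun j => entry_conj (w j)) *m partial_transpose rho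
             *m adjoint_mx (Kop u (fun j => entry_conj (w j)))).
Proof.
move=> _ _ _ [psd_rho subD] [_ psd_pt]; split; split; try exact: psd_mx_congr.
- apply: graph_sub_support subD => i j; rewrite Kop_congr_entry.
  by move=> /(ppt_mxform_tens_diag_neq0 psd_pt) [Dij Dji]; apply: mulf_neq0; rewrite mxE.
- apply: graph_sub_support subD => i j.
  rewrite Kop_congr_entry mxform_partial_transpose !entry_conjK.
  by move=> /(psd_mxform_diag_neq0 psd_rho) [Dij Dji]; apply: mulf_neq0; rewrite mxE.
Qed.
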